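(* Consider a neutral evolutionary model on $N$ sites given by a replacement rule $p$ satisfying the fixation assumption described in the context, with replacement probabilities $e_{ij}$, death rates $d_i$, total birth rate $B>0$, site-specific fixation probabilities $\rho_i$, overall fixation probability $\rho=\frac{1}{B}\sum_{i=1}^N d_i\rho_i$ and molecular clock rate $K=Nu\rho$ (for a mutation probability $u>0$ per reproduction). If the death rates $d_i$ are constant over all sites $i=1,\ldots,N$, then $\rho=1/N$, and consequently $K=u$.
   Context: There are $N$ sites $1,\ldots,N$, each always occupied by one individual of type M (mutant) or R (resident); a state is $\mathbf{s}=(s_1,\ldots,s_N)\in\{\mathrm{M},\mathrm{R}\}^N$. A replacement event is a pair $(R,\alpha)$ with $R\subseteq\{1,\ldots,N\}$ and $\alpha:R\to\{1,\ldots,N\}$ (the occupant of each $j\in R$ is replaced by an offspring of the occupant of $\alpha(j)$). A replacement rule is a probability distribution $p(R,\alpha)$ on replacement events, independent of the state. The evolutionary Markov chain: at each time-step an event $(R,\alpha)$ is drawn with probability $p(R,\alpha)$ and the new state is $s_i'=s_i$ if $i\notin R$, $s_i'=s_{\alpha(i)}$ if $i\in R$. Fixation assumption: there exist a site $i$ and a finite sequence of replacement events, each of positive probability, such that if these events occur consecutively (from any initial state) every site ends up carrying the type initially at site $i$. Define $e_{ij}=\sum_{(R,\alpha):\, j\in R,\ \alpha(j)=i}p(R,\alpha)$, $b_i=\sum_j e_{ij}$ (birth rate), $d_i=\sum_j e_{ji}$ (death rate), $B=\sum_{i,j}e_{ij}$. The site-specific fixation probability $\rho_i$ is the probability that the chain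 started from the state with M at site $i$ and R elsewhere is eventually absorbed in $(\mathrm{M},\ldots,\mathrm{M})$. *)

From HB Require Import structures.
From mathcomp Require Import all_boot all_order all_algebra.
From mathcomp Require Import all_classical all_reals all_analysis.
Set Implicit Arguments. Unset Strict Implicit. Unset Printing Implicit Defensive.
Import Order.TTheory GRing.Theory Num.Theory.
Import numFieldNormedType.Exports.
Local Open Scope ring_scope.

(* Sites are 'I_N.  A state assigns to each site a type: true = M (mutant), false = R (resident). *)
Definition state (N : nat) := {ffun 'I_N -> bool}.

(* A replacement event (R, alpha) is encoded as a finite function
   a : 'I_N -> option 'I_N with  j \in R <-> a j = Some (alpha j),
   and  j \notin R <-> a j = None.  This is a bijective encoding. *)
Definition event (N : nat) := {ffun 'I_N -> option 'I_N}.

Definition is_replacement_rule (R : realType) (N : nat) (p : event N -> R) : Prop :=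
  (forall a, 0 <= p a) /\ \sum_(a : event N) p a = 1.

Definition step (N : nat) (a : event N) (s : state N) : state N :=
  [ffun i => if a i is Some j then s j else s i].

Definition run (N : nat) (l : seq (event N)) (s : state N) : state N :=
  foldl (fun s a => step a s) s l.

Definition fixation_assumption (R : realType) (N : nat) (p : event N -> R) : Prop :=
  exists (i : 'I_N) (l : seq (event N)),
    all (fun a => 0 < p a) l /\
    forall (s : state N) (j : 'I_N), run l s j = s i.

Definition trans (R : realType) (N : nat) (p : event N -> R) (s t : state N) : R :=
  \sum_(a : event N | step a s == t) p a.

Fixpoint nstep (R : realType) (N : nat) (p : event N -> R) (n : nat) (s t : state N) : R :=
  match n with
  | 0 => (s == t)%:R
  | n'.+1 => \sum_(u : state N) trans p s u * nstep p n' u t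
  end.

Definition allM (N : nat) : state N := [ffun _ => true].
Definition single (N : nat) (i : 'I_N) : state N := [ffun j => j == i].

(* Site-specific fixation probability: probability of eventual absorption in
   (M,...,M) starting from M at site i only.  Since (M,...,M) is absorbing, this is
   the limit of the (nondecreasing) n-step probabilities of being in (M,...,M). *)
Definition rho_site (R : realType) (N : nat) (p : event N -> R) (i : 'I_N) : R :=
  limn (fun n => nstep p n (single i) (allM N)).

Definition erate (R : realType) (N : nat) (p : event N -> R) (i j : 'I_N) : R :=
  \sum_(a : event N | a j == Some i) p a.
Definition birth (R : realType) (N : nat) (p : event N -> R) (i : 'I_N) : R :=
  \sum_(j : 'I_N) erate p i j.
Definition death (R : realType) (N : nat) (p : event N -> R) (i : 'I_N) : R :=
  \sum_(j : 'I_N) erate p j i.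
Definition Btot (R : realType) (N : nat) (p : event N -> R) : R :=
  \sum_(i : 'I_N) \sum_(j : 'I_N) erate p i j.

Definition rho_overall (R : realType) (N : nat) (p : event N -> R) : R :=
  (Btot p)^-1 * \sum_(i : 'I_N) death p i * rho_site p i.

Definition Kclock (R : realType) (N : nat) (p : event N -> R) (u : R) : R :=
  N%:R * u * rho_overall p.

From HB Require Import structures.
From mathcomp Require Import all_boot all_order all_algebra.
From mathcomp Require Import all_classical all_reals all_analysis.
From mathcomp Require Import ring lra.
Import Order.TTheory GRing.Theory Num.Theory.
Import numFieldNormedType.Exports.
Local Open Scope ring_scope.
Set Implicit Arguments. Unset Strict Implicit. Unset Printing Implicit Defensive.

(* Follow ancestries backwards.  Events act on ancestry maps g : 'I_N -> 'I_N
   (g j is the site whose initial occupant is the ancestor of the occupant of j),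
   and the state reached from s is s \o g.  So rho_i is the limiting probability
   that every site descends from i, and sum_i rho_i is the probability that the
   ancestry eventually coalesces.  The event sequence l of the fixation assumption
   coalesces every ancestry, so from any ancestry the chain coalesces within |l|
   steps with probability at least q = prod_(a in l) p a > 0; hence it coalesces
   almost surely and sum_i rho_i = 1.  With constant death rate d,
   B = N d and rho = (N d)^-1 d sum_i rho_i = 1/N. *)

Definition gstep (N : nat) (T : Type) (a : event N) (x : {ffun 'I_N -> T}) :
    {ffun 'I_N -> T} :=
  [ffun i => if a i is Some j then x j else x i].

Definition grun (N : nat) (T : Type) (l : seq (event N)) (x : {ffun 'I_N -> T}) :
    {ffun 'I_N -> T} :=
  foldl (fun x a => gstep a x) x l.

Section Expectation.
Variables (R : realType) (N : nat) (T : Type) (p : event N -> R).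
Hypothesis p_ge0 : forall a, 0 <= p a.
Hypothesis p_sum1 : \sum_a p a = 1.

Fixpoint expect (n : nat) (f : {ffun 'I_N -> T} -> R) (x : {ffun 'I_N -> T}) : R :=
  if n is n'.+1 then \sum_a p a * expect n' f (gstep a x) else f x.

Lemma eq_expect n f g : f =1 g -> expect n f =1 expect n g.
Proof.
move=> fg; elim: n => [|n IH] x /=; first exact: fg.
by apply: eq_bigr => a _; rewrite IH.
Qed.

Lemma expect_add n m f x : expect (n + m) f x = expect n (expect m f) x.
Proof. by elim: n x => [|n IH] x //=; apply: eq_bigr => a _; rewrite IH. Qed.

Lemma expect_sum (I : finType) (F : I -> {ffun 'I_N -> T} -> R) n x :
  expect n (fun y => \sum_i F i y) x = \sum_i expect n (F i) x.
Proof.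
elim: n x => [|n IH] x //=; rewrite exchange_big /=.
by apply: eq_bigr => a _; rewrite IH big_distrr.
Qed.

Lemma expect_affine n c k f x :
  expect n (fun y => c + k * f y) x = c + k * expect n f x.
Proof.
elim: n x => [|n IH] x //=.
under eq_bigr do rewrite IH mulrDr.
rewrite big_split /= -big_distrl /= p_sum1 mul1r big_distrr /=.
by congr (_ + _); apply: eq_bigr => a _; rewrite mulrCA.
Qed.

Lemma ler_expect n f g x : (forall y, f y <= g y) -> expect n f x <= expect n g x.
Proof.
move=> fg; elim: n x => [|n IH] x /=; first exact: fg.
by apply: ler_sum => a _; rewrite ler_wpM2l.
Qed.

Lemma expect_cst n c x : expect n (fun=> c) x = c.
Proof.
elim: n x => [|n IH] x //=.
by under eq_bigr do rewrite IH; rewrite -big_distrl /= p_sum1 mul1r.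
Qed.

Lemma expect_le1 n f x : (forall y, f y <= 1) -> expect n f x <= 1.
Proof. by move=> f_le1; rewrite -(expect_cst n 1 x) ler_expect. Qed.

Lemma expect_ge0 n f x : (forall y, 0 <= f y) -> 0 <= expect n f x.
Proof.
move=> f_ge0; elim: n x => [|n IH] x //=.
by apply: sumr_ge0 => a _; rewrite mulr_ge0.
Qed.

Lemma expect_ge_run l f x :
  (forall y, 0 <= f y) -> (\prod_(a <- l) p a) * f (grun l x) <= expect (size l) f x.
Proof.
move=> f_ge0; elim: l x => [|a l IH] x /=; first by rewrite big_nil mul1r.
rewrite big_cons -mulrA (bigD1 a) //=.
apply: (@le_trans _ _ (p a * expect (size l) f (gstep a x))).
  by rewrite ler_wpM2l ?IH.
by rewrite lerDl sumr_ge0 // => b _; rewrite mulr_ge0 ?expect_ge0.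
Qed.

Lemma expect_nondecreasing f x :
  (forall a y, f y <= f (gstep a y)) -> nondecreasing_seq (fun n => expect n f x).
Proof.
move=> f_step; apply/nondecreasing_seqP => n.
rewrite -addn1 expect_add; apply: ler_expect => y /=.
rewrite -[f y]mul1r -p_sum1 big_distrl /=.
by apply: ler_sum => a _; rewrite ler_wpM2l.
Qed.

End Expectation.

Lemma expect_map (R : realType) (N : nat) (T1 T2 : Type) (p : event N -> R)
    (phi : {ffun 'I_N -> T1} -> {ffun 'I_N -> T2}) f n x :
  (forall a y, gstep a (phi y) = phi (gstep a y)) ->
  expect p n f (phi x) = expect p n (f \o phi) x.
Proof.
move=> phi_step; elim: n x => [|n IH] x //=.
by apply: eq_bigr => a _; rewrite phi_step IH.
Qed.

Lemma nstep_expect (R : realType) (N : nat) (p : event N -> R) n (s t : state N) :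
  nstep p n s t = expect p n (fun x => (x == t)%:R) s.
Proof.
elim: n s => [|n IH] s //=.
rewrite (partition_big (fun a => step a s) predT) //=.
apply: eq_bigr => u _; rewrite /trans big_distrl /=.
by apply: eq_bigr => a /eqP step_a; rewrite IH -step_a.
Qed.

Section Ancestry.
Variable N : nat.
Implicit Types (s : state N) (g : {ffun 'I_N -> 'I_N}) (i : 'I_N) (a : event N).

Definition ancestral s g : state N := [ffun j => s (g j)].

Lemma gstep_ancestral a s g : gstep a (ancestral s g) = ancestral s (gstep a g).
Proof. by apply/ffunP => j; rewrite !ffunE; case: (a j) => [k|]; rewrite ?ffunE. Qed.

Lemma run_ancestral l s g : run l (ancestral s g) = ancestral s (grun l g).
Proof.
elim: l g => [|a l IH] g //.
by rewrite [run _ _]/= -[step _ _]/(gstep a _) gstep_ancestral IH.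
Qed.

Definition descends_from i g : bool := [forall j, g j == i].

Definition coalesced g : bool := [exists i, descends_from i g].

Lemma ancestral_single_allM i g : (ancestral (single i) g == allM N) = descends_from i g.
Proof.
apply/eqP/forallP => [gi j | gi].
  by have := congr1 (fun s : state N => s j) gi; rewrite !ffunE.
by apply/ffunP => j; rewrite !ffunE gi.
Qed.

Lemma descends_from_gstep i a g : descends_from i g -> descends_from i (gstep a g).
Proof.
move=> /forallP gi; apply/forallP => j; rewrite ffunE.
by case: (a j) => [k|]; apply: gi.
Qed.

Lemma coalesced_gstep a g : coalesced g -> coalesced (gstep a g).
Proof. by case/existsP=> i gi; apply/existsP; exists i; apply: descends_from_gstep. Qed.

Lemma sum_descends_from (R : nzSemiRingType) g :
  \sum_i (descends_from i g)%:R = (coalesced g)%:R :> R.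
Proof.
case: (boolP (coalesced g)) => [/existsP [i gi] | /existsPn g_nc].
  rewrite (bigD1 i) //= gi big1 ?addr0 // => k k_neq_i.
  suff -> : descends_from k g = false by [].
  apply: contraNF k_neq_i; move: gi; rewrite /descends_from => /forallP gi /forallP gk.
  by rewrite -(eqP (gi i)) (eqP (gk i)).
by apply: big1 => i _; rewrite (negbTE (g_nc i)).
Qed.

Lemma grun_descends_from i l :
  (forall s j, run l s j = s i) -> forall g, descends_from (g i) (grun l g).
Proof.
move=> l_fix g; apply/forallP => j.
by have := l_fix (ancestral [ffun k => k == g i] g) j; rewrite run_ancestral !ffunE eqxx.
Qed.

End Ancestry.

Lemma limn_eq1_geometric (R : realType) (c : R^nat) (r : R) (m : nat) :
  nondecreasing_seq c -> (forall n, c n <= 1) -> 0 <= r < 1 ->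
  (forall k, 1 - r ^+ k <= c (k * m)%N) -> limn c = 1.
Proof.
move=> c_nd c_le1 /andP [r_ge0 r_lt1] c_ge.
have c_cvg : cvgn c.
  by apply: nondecreasing_is_cvgn => //; exists 1 => _ [n _ <-].
have r_cvg : (r ^+ n @[n --> \oo] --> 0)%classic by apply: cvg_expr; rewrite ger0_norm.
apply/eqP; rewrite eq_le; apply/andP; split.
  by apply: limr_le => //; apply: nearW.
rewrite -subr_le0 -(cvg_lim _ r_cvg) //; apply: limr_ge; first exact: cvgP r_cvg.
apply: nearW => k; have := nondecreasing_cvgn_le c_nd c_cvg (k * m).
by have := c_ge k; lra.
Qed.

Section Coalescence.
Variables (R : realType) (N : nat) (p : event N -> R).
Hypotheses (p_ge0 : forall a, 0 <= p a) (p_sum1 : \sum_a p a = 1).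
Variables (i0 : 'I_N) (l0 : seq (event N)).
Hypothesis l0_pos : all (fun a => 0 < p a) l0.
Hypothesis l0_fix : forall s j, run l0 s j = s i0.

Let q := \prod_(a <- l0) p a.
Let C (g : {ffun 'I_N -> 'I_N}) : R := (coalesced g)%:R.

Let q_gt0 : 0 < q.
Proof. by rewrite /q big_seq; apply: prodr_gt0 => a /(allP l0_pos). Qed.

Let q_le1 : q <= 1.
Proof.
apply: prodr_ile1 => a _; rewrite p_ge0 -p_sum1 (bigD1 a) //=.
by rewrite lerDl sumr_ge0.
Qed.

Let C_step a g : C g <= C (gstep a g).
Proof. by rewrite ler_nat; case: (boolP (coalesced g)) => // /(coalesced_gstep a) ->. Qed.

(* Either g has already coalesced, or the run l0, of probability q, coalesces it. *)
Lemma expect_coalesced_run g : q + (1 - q) * C g <= expect p (size l0) C g.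
Proof.
case: (boolP (coalesced g)) => g_c.
  have := expect_nondecreasing p_ge0 p_sum1 g C_step (leq0n (size l0)).
  by rewrite /= /C g_c mulr1 addrC subrK.
rewrite /C (negbTE g_c) mulr0 addr0.
apply: le_trans (expect_ge_run p_ge0 l0 g _) => [|y]; last by rewrite ler0n.
suff -> : coalesced (grun l0 g) by rewrite mulr1.
by apply/existsP; exists (g i0); apply: grun_descends_from.
Qed.

Lemma expect_coalesced_geometric k g :
  1 - (1 - q) ^+ k <= expect p (k * size l0) C g.
Proof.
elim: k g => [|k IH] g; first by rewrite expr0 subrr /C ler0n.
rewrite mulSn addnC expect_add.
apply: le_trans (ler_expect p_ge0 _ _ expect_coalesced_run).
have -> : 1 - (1 - q) ^+ k.+1 = q + (1 - q) * (1 - (1 - q) ^+ k) by rewrite exprS; ring.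
by rewrite expect_affine // lerD2l ler_wpM2l ?subr_ge0.
Qed.

Lemma limn_expect_coalesced g : limn (fun n => expect p n C g) = 1.
Proof.
apply: (@limn_eq1_geometric _ _ (1 - q) (size l0)).
- exact: expect_nondecreasing.
- by move=> n; apply: expect_le1 => // y; rewrite /C lern1 leq_b1.
- by rewrite subr_ge0 q_le1 /= ltrBlDr ltrDl.
- by move=> k; apply: expect_coalesced_geometric.
Qed.

End Coalescence.

Lemma rho_site_expect (R : realType) (N : nat) (p : event N -> R) (i : 'I_N) :
  rho_site p i = limn (fun n => expect p n (fun g => (descends_from i g)%:R) [ffun j => j]).
Proof.
rewrite /rho_site; congr (limn _); apply/funext => n; rewrite nstep_expect.
have -> : single i = ancestral (single i) [ffun j => j] by apply/ffunP => j; rewrite !ffunE.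
rewrite expect_map; last by move=> a g; apply: gstep_ancestral.
by apply: eq_expect => g /=; rewrite ancestral_single_allM.
Qed.

Lemma sum_rho_site (R : realType) (N : nat) (p : event N -> R) :
  is_replacement_rule p -> fixation_assumption p -> \sum_i rho_site p i = 1.
Proof.
move=> [p_ge0 p_sum1] [i0 [l0 [l0_pos l0_fix]]].
pose g0 : {ffun 'I_N -> 'I_N} := [ffun j => j].
pose v i n := expect p n (fun g => (descends_from i g)%:R : R) g0.
have v_cvg i : cvgn (v i).
  apply: nondecreasing_is_cvgn.
    apply: expect_nondecreasing => // a g.
    by rewrite ler_nat; case: (boolP (descends_from i g)) => // /(descends_from_gstep a) ->.
  exists 1 => _ [n _ <-]; apply: expect_le1 => // g.
  by rewrite lern1 leq_b1.
have sum_v : (\sum_i v i n @[n --> \oo] --> \sum_i limn (v i))%classic.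
  by apply: cvg_big => [|i _]; [exact: add_continuous | exact: v_cvg].
under eq_bigr do rewrite rho_site_expect.
rewrite -(cvg_lim _ sum_v) // -(limn_expect_coalesced p_ge0 p_sum1 l0_pos l0_fix g0).
congr (limn _); apply/funext => n /=.
by rewrite -expect_sum; apply: eq_expect => g; rewrite sum_descends_from.
Qed.

Lemma Btot_death (R : realType) (N : nat) (p : event N -> R) :
  Btot p = \sum_i death p i.
Proof. exact: exchange_big. Qed.

Unset Implicit Arguments.

Theorem mainTheorem1 (R : realType) (N : nat) (p : event N -> R) (u : R) :
  is_replacement_rule p ->
  fixation_assumption p ->
  0 < Btot p ->
  0 < u ->
  (exists d : R, forall i : 'I_N, death p i = d) ->
  rho_overall p = (N%:R)^-1 /\ Kclock p u = u.
Proof.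
move=> p_rule p_fix B_gt0 _ [d death_d].
have B_Nd : Btot p = N%:R * d.
  by rewrite Btot_death; under eq_bigr do rewrite death_d; rewrite sumr_const card_ord mulr_natl.
have /andP [N_neq0 d_neq0] : (N%:R != 0 :> R) && (d != 0).
  by rewrite -negb_or -mulf_eq0 -B_Nd lt0r_neq0.
have rhoE : rho_overall p = (N%:R)^-1.
  rewrite /rho_overall B_Nd; under eq_bigr do rewrite death_d.
  by rewrite -big_distrr /= sum_rho_site // mulr1 invfM -mulrA mulVf ?mulr1.
by split=> //; rewrite /Kclock rhoE mulrAC mulfV ?mul1r.
Qed.
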